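(* Let $n\ge 2$ and let $O_n$ be the Cuntz algebra generated by isometries $S_1,\dots,S_n$ with $\sum_{i=1}^n S_iS_i^* = 1$. Let $\phi_n$ be the unique state on $O_n$ with $\phi_n(ab)=\phi_n(ba)$ for all $a\in O_n$, $b\in F_n$. Let $\Phi_n(x)=\sum_{i=1}^n S_i x S_i^*$ and $\Psi_n(x) = \frac1n\sum_{i=1}^n S_i^* x S_i$ for $x\in O_n$. Then (i) $\phi_n\circ\Phi_n = \phi_n$; and (ii) $\Psi_n$ is the adjoint of $\Phi_n$ with respect to $\phi_n$, i.e. $\phi_n(y^*\Phi_n(x)) = \phi_n(\Psi_n(y)^* x)$ for all $x,y\in O_n$.
   Context: For a multi-index $\mu=(\mu_1,\dots,\mu_k)\in\{1,\dots,n\}^k$, $S_\mu = S_{\mu_1}\cdots S_{\mu_k}$ ($S_\emptyset=1$). $F_n$ is the norm closure of the span of all $S_\mu S_\nu^*$ with $|\mu|=|\nu|$ (the canonical UHF subalgebra of type $n^\infty$). The state $\phi_n$ extending the unique trace of $F_n$ with the stated property exists and is unique. *)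

From HB Require Import structures.
From mathcomp Require Import all_boot all_order all_algebra.
From mathcomp Require Import reals complex.
Set Implicit Arguments. Unset Strict Implicit. Unset Printing Implicit Defensive.
Import Order.TTheory GRing.Theory Num.Theory.
Local Open Scope ring_scope.

Section CStar.
Variable R : realType.
Local Notation C := (complex R).
Variable A : algType C.
Variable star : A -> A.
Variable nrm : A -> C.

(* A unital C*-algebra over C: a complete normed unital *-algebra with the
   C*-identity.  The norm takes values in C but is required to be >= 0 (so it
   is real). *)
Record is_cstar_algebra : Prop := CStarAlgebra {
  star_add  : forall a b, star (a + b) = star a + star b;
  star_scale : forall (c : C) a, star (c *: a) = Num.conj c *: star a;
  star_mul  : forall a b, star (a * b) = star b * star a;
  star_invol : forall a, star (star a) = a;
  nrm_ge0   : forall a, 0 <= nrm a;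
  nrm_eq0   : forall a, nrm a = 0 -> a = 0;
  nrm_scale : forall (c : C) a, nrm (c *: a) = `|c| * nrm a;
  nrm_triangle : forall a b, nrm (a + b) <= nrm a + nrm b;
  nrm_submul : forall a b, nrm (a * b) <= nrm a * nrm b;
  nrm_cstar : forall a, nrm (star a * a) = nrm a ^+ 2;
  nrm_complete : forall u : nat -> A,
    (forall e : C, 0 < e -> exists N, forall m k, (N <= m)%N -> (N <= k)%N ->
        nrm (u m - u k) < e) ->
    exists l, forall e : C, 0 < e -> exists N, forall m, (N <= m)%N ->
        nrm (u m - l) < e
}.

Definition nclosure (P : A -> Prop) (a : A) : Prop :=
  forall e : C, 0 < e -> exists b, P b /\ nrm (a - b) < e.

Inductive star_subalg_gen (I : Type) (S : I -> A) : A -> Prop :=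
| ssg_gen  : forall i, star_subalg_gen S (S i)
| ssg_one  : star_subalg_gen S 1
| ssg_add  : forall a b, star_subalg_gen S a -> star_subalg_gen S b ->
               star_subalg_gen S (a + b)
| ssg_scale : forall (c : C) a, star_subalg_gen S a -> star_subalg_gen S (c *: a)
| ssg_mul  : forall a b, star_subalg_gen S a -> star_subalg_gen S b ->
               star_subalg_gen S (a * b)
| ssg_star : forall a, star_subalg_gen S a -> star_subalg_gen S (star a).

Definition cstar_generated_by (I : Type) (S : I -> A) : Prop :=
  forall a, nclosure (star_subalg_gen S) a.

Inductive span (P : A -> Prop) : A -> Prop :=
| span0 : span P 0
| spanS : forall (c : C) w x, P w -> span P x -> span P (c *: w + x).

Definition Sword (n : nat) (S : 'I_n -> A) (mu : seq 'I_n) : A :=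
  \prod_(i <- mu) S i.

Definition Fn_elem (n : nat) (S : 'I_n -> A) (a : A) : Prop :=
  exists mu nu : seq 'I_n, size mu = size nu /\ a = Sword S mu * star (Sword S nu).
Definition in_Fn (n : nat) (S : 'I_n -> A) : A -> Prop :=
  nclosure (span (Fn_elem S)).

Record is_state (phi : A -> C) : Prop := State {
  state_add : forall a b, phi (a + b) = phi a + phi b;
  state_scale : forall (c : C) a, phi (c *: a) = c * phi a;
  state_pos : forall a, 0 <= phi (star a * a);
  state_one : phi 1 = 1
}.

Definition PhiN (n : nat) (S : 'I_n -> A) (x : A) : A :=
  \sum_(i < n) S i * x * star (S i).
Definition PsiN (n : nat) (S : 'I_n -> A) (x : A) : A :=
  (n%:R)^-1 *: \sum_(i < n) star (S i) * x * S i.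

End CStar.

From Pilot Require Import Defs.
From HB Require Import structures.
From mathcomp Require Import all_boot all_order all_algebra.
From mathcomp Require Import reals complex.
From mathcomp Require Import ring lra.
Set Implicit Arguments. Unset Strict Implicit. Unset Printing Implicit Defensive.
Import Order.TTheory GRing.Theory Num.Theory.
Local Open Scope ring_scope.

(* On the words [S_mu S_nu^*] the state is forced: conjugating by [S_al] and
   using the trace property on [F_n] gives
   [phi (S_al S_mu S_nu^* S_al^* ) = (mu == nu) n^-(|al| + |mu|)], the
   off-diagonal and unbalanced cases vanishing by positivity and Cauchy-Schwarz.
   Hence [phi (S_i x S_i^* ) = phi x / n] on the *-algebra generated by the
   [S_i], and then on all of [O_n] because states are bounded
   ([|phi a| <= 2 |a|], via a square root of [1 - h] for small hermitian [h]).
   Summing over [i] gives (i); for (ii), [S_i S_i^* \in F_n] gives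
   [phi (y^* S_i x S_i^* ) = phi (S_i (S_i^* y^* S_i x) S_i^* )]. *)

Lemma exprVn2_lt (R : realType) (e : R) : 0 < e -> exists N : nat, 2^-1 ^+ N < e.
Proof.
move=> e_gt0; have /archi_boundP bnd : 0 <= e^-1 by rewrite invr_ge0 ltW.
exists (Num.Def.archi_bound e^-1).
rewrite exprVn -[X in _ < X]invrK ltf_pV2 ?posrE ?exprn_gt0 ?invr_gt0 //.
by apply: lt_trans bnd _; rewrite -natrX ltr_nat ltn_expl.
Qed.

Lemma mulr_sqr_sub (Rg : pzRingType) (a b : Rg) :
  a * a - b * b = a * (a - b) + (a - b) * b.
Proof. by rewrite mulrBr mulrBl addrA subrK. Qed.

Section ComplexArith.
Variable R : realType.
Local Notation C := (complex R).
Local Notation cr := (real_complex R).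

Lemma cr_ge0E (z : C) : 0 <= z -> z = cr (complex.Re z).
Proof. by move=> hz; rewrite {1}[z]complexE (ger0_Im hz) mulr0 addr0. Qed.

Lemma cr_halfX N : 2^-1 ^+ N = cr (2^-1 ^+ N).
Proof. by rewrite rmorphXn fmorphV rmorph_nat. Qed.

Lemma le_halfX_eq0 (x : C) : 0 <= x -> (forall m, x <= 2^-1 ^+ m) -> x = 0.
Proof.
move=> x_ge0 x_le; have Re_ge0 : 0 <= complex.Re x by rewrite -ler0c -cr_ge0E.
move: x_le; rewrite (cr_ge0E x_ge0) => x_le.
suff -> : complex.Re x = 0 by rewrite rmorph0.
apply: le_anti; rewrite Re_ge0 andbT leNgt; apply/negP => /exprVn2_lt [N ltN].
by have := x_le N; rewrite cr_halfX lecR leNgt ltN.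
Qed.

Lemma normC_eps (z : C) : (forall d : R, 0 < d -> `|z| <= cr d) -> z = 0.
Proof.
move=> z_le; apply/normr0_eq0; rewrite (cr_ge0E (normr_ge0 z)).
suff -> : complex.Re `|z| = 0 by rewrite rmorph0.
apply: le_anti; rewrite -ler0c -cr_ge0E ?normr_ge0 // andbT.
apply/ler_addgt0Pr => d d_gt0; rewrite add0r -lecR -cr_ge0E ?normr_ge0 //.
exact: z_le.
Qed.

Lemma ltr0c (t : R) : (0 < cr t) = (0 < t).
Proof. exact: ltcR. Qed.

Lemma conj_cr (t : R) : (cr t)^* = cr t.
Proof. by apply: conj_Creal; apply/complex_realP; exists t. Qed.

Lemma normC_cr (t : R) : `|cr t| = cr `|t|.
Proof. by rewrite normc_def /= expr0n /= addr0 sqrtr_sqr. Qed.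

End ComplexArith.

Section StarAlgebra.
Variable R : realType.
Local Notation C := (complex R).
Local Notation cr := (real_complex R).
Variable A : algType C.
Variable st : A -> A.
Variable nrm : A -> C.
Hypothesis HA : is_cstar_algebra st nrm.

Lemma starD a b : st (a + b) = st a + st b. Proof. exact: star_add HA a b. Qed.
Lemma starZ c a : st (c *: a) = c^* *: st a. Proof. exact: star_scale HA c a. Qed.
Lemma starM a b : st (a * b) = st b * st a. Proof. exact: star_mul HA a b. Qed.
Lemma starK a : st (st a) = a. Proof. exact: star_invol HA a. Qed.

Lemma star0 : st 0 = 0.
Proof. by apply: (addrI (st 0)); rewrite -starD !addr0. Qed.

Lemma starN a : st (- a) = - st a.
Proof. by apply: (addrI (st a)); rewrite -starD !subrr star0. Qed.

Lemma starB a b : st (a - b) = st a - st b.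
Proof. by rewrite starD starN. Qed.

Lemma star1 : st 1 = 1.
Proof. by rewrite -[st 1]mulr1 -[X in _ * X]starK -starM mulr1 starK. Qed.

Lemma star_sum (I : Type) (r : seq I) (F : I -> A) :
  st (\sum_(i <- r) F i) = \sum_(i <- r) st (F i).
Proof. by elim: r => [|x r IH]; rewrite ?big_nil ?star0 // !big_cons starD IH. Qed.

Definition nr a := complex.Re (nrm a).

Lemma nrmE a : nrm a = cr (nr a).
Proof. exact: cr_ge0E (nrm_ge0 HA a). Qed.

Lemma nr_ge0 a : 0 <= nr a.
Proof. by rewrite -ler0c -nrmE (nrm_ge0 HA). Qed.

Lemma nr_eq0 a : nr a = 0 -> a = 0.
Proof. by move=> nra0; apply: (nrm_eq0 HA); rewrite nrmE nra0 rmorph0. Qed.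

Lemma nrD a b : nr (a + b) <= nr a + nr b.
Proof. by rewrite -lecR rmorphD /= -!nrmE (nrm_triangle HA). Qed.

Lemma nrM a b : nr (a * b) <= nr a * nr b.
Proof. by rewrite -lecR rmorphM /= -!nrmE (nrm_submul HA). Qed.

Lemma nrZ t a : nr (cr t *: a) = `|t| * nr a.
Proof. by apply: complexI; rewrite rmorphM /= -normC_cr -!nrmE (nrm_scale HA). Qed.

Lemma nr_cstar a : nr (st a * a) = nr a ^+ 2.
Proof. by apply: complexI; rewrite rmorphXn /= -!nrmE (nrm_cstar HA). Qed.

Lemma nr0 : nr 0 = 0.
Proof. by rewrite -(scale0r 0) -(rmorph0 cr) nrZ normr0 mul0r. Qed.

Lemma nrN a : nr (- a) = nr a.
Proof. by rewrite -scaleN1r -(rmorphN1 cr) nrZ normrN1 mul1r. Qed.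

Lemma nr_distC a b : nr (a - b) = nr (b - a).
Proof. by rewrite -nrN opprB. Qed.

Lemma nr_dist_le a b c : nr (a - c) <= nr (a - b) + nr (b - c).
Proof. by have := nrD (a - b) (b - c); rewrite addrA subrK. Qed.

Lemma nr_star a : nr (st a) = nr a.
Proof.
suff nr_le_star b : nr b <= nr (st b).
  by apply: le_anti; rewrite nr_le_star -[X in _ <= nr X]starK nr_le_star.
have := nrM (st b) b; rewrite nr_cstar expr2.
have [->|nrb_neq0] := eqVneq (nr b) 0; first by rewrite nr_ge0.
by rewrite ler_pM2r // lt_def nrb_neq0 nr_ge0.
Qed.

Definition nr_cvg (u : nat -> A) (l : A) :=
  forall e : R, 0 < e -> exists N, forall m, (N <= m)%N -> nr (u m - l) < e.

Lemma nr_complete (u : nat -> A) :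
  (forall e : R, 0 < e -> exists N, forall m k, (N <= m)%N -> (N <= k)%N ->
     nr (u m - u k) < e) ->
  exists l, nr_cvg u l.
Proof.
move=> u_cauchy; have [|l ul] := nrm_complete HA (u := u).
  move=> e e_gt0; have e_real := cr_ge0E (ltW e_gt0).
  have [|N uN] := u_cauchy (complex.Re e); first by rewrite -ltr0c -e_real.
  by exists N => m k mN kN; rewrite e_real nrmE ltcR uN.
exists l => e e_gt0; have [|N uN] := ul (cr e); first by rewrite ltr0c.
by exists N => m mN; rewrite -ltcR -nrmE uN.
Qed.

Lemma nr_lt_eq0 a : (forall e : R, 0 < e -> nr a < e) -> a = 0.
Proof.
move=> a_small; apply: nr_eq0; apply: le_anti; rewrite nr_ge0 andbT leNgt.
by apply/negP => /a_small; rewrite ltxx.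
Qed.

Lemma nr_isometry_le1 v : st v * v = 1 -> nr v <= 1.
Proof.
move=> vK; have := nr_cstar v; have := nr_cstar 1.
rewrite vK star1 mulr1 => nr1 nrv.
have nr1_le1 : nr 1 <= 1 by have := nr_ge0 1; nra.
have := nr_ge0 v; nra.
Qed.

Lemma nr_conj_isometry v w : st v * v = 1 -> nr (v * w * st v) <= nr w.
Proof.
move=> /nr_isometry_le1 nrv_le1.
have := nrM (v * w) (st v); have := nrM v w; rewrite nr_star.
have := nr_ge0 v; have := nr_ge0 w; have := nr_ge0 (v * w); nra.
Qed.

Lemma nclosure_additive_eq0 (f : A -> C) (K : R) (P : A -> Prop) :
    (forall a b, f (a + b) = f a + f b) ->
    (forall a, `|f a| <= cr (K * nr a)) -> (forall b, P b -> f b = 0) ->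
  forall a, nclosure nrm P a -> f a = 0.
Proof.
move=> fD f_bounded fP a a_cl; apply: normC_eps => d d_gt0.
have K1_gt0 : 0 < `|K| + 1 by have := normr_ge0 K; lra.
have [|b [Pb ab_lt]] := a_cl (cr (d / (`|K| + 1))); first by rewrite ltr0c divr_gt0.
have -> : f a = f (a - b) + f b by rewrite -fD subrK.
rewrite (fP b Pb) addr0.
apply: le_trans (f_bounded _) _; rewrite lecR.
move: ab_lt; rewrite nrmE ltcR ltr_pdivlMr // => ab_lt.
have := nr_ge0 (a - b); have := ler_norm K; nra.
Qed.

Section SquareRoot.
Variable h : A.
Hypothesis h_herm : st h = h.
Hypothesis h_small : nr h <= 3 / 4.

Local Notation half := (cr 2^-1).

Lemma nr_half a : nr (half *: a) = 2^-1 * nr a.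
Proof. by rewrite nrZ ger0_norm // invr_ge0 ler0n. Qed.

(* The limit [l] is [1 - sqrt (1 - h)]: it solves [l = (h + l^2) / 2], whose
   right-hand side is a 1/2-contraction on the ball of radius 1/2. *)
Fixpoint sqrt_iter k : A :=
  if k is k'.+1 then half *: (h + sqrt_iter k' * sqrt_iter k') else 0.

Local Notation x := sqrt_iter.

Lemma sqrt_iter_le k : nr (x k) <= 2^-1.
Proof.
elim: k => [|k IH] /=; first by rewrite nr0 invr_ge0 ler0n.
have sqr_le : nr (x k) * nr (x k) <= 2^-1 * 2^-1 by rewrite ler_pM ?nr_ge0.
rewrite nr_half; have := nrD h (x k * x k); have := nrM (x k) (x k); have := h_small; lra.
Qed.

Lemma sqrt_iter_herm k : st (x k) = x k.
Proof.
elim: k => [|k IH] /=; first exact: star0.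
by rewrite starZ conj_cr starD starM IH h_herm.
Qed.

Lemma sqrt_map_sub a b :
  half *: (h + a * a) - half *: (h + b * b) = half *: (a * (a - b) + (a - b) * b).
Proof. by rewrite -scalerBr opprD addrACA subrr add0r mulr_sqr_sub. Qed.

Lemma sqrt_iter_contract k :
  nr (x k.+2 - x k.+1) <= 2^-1 * nr (x k.+1 - x k).
Proof.
rewrite [x k.+2]/= [x k.+1 in X in _ - X]/= sqrt_map_sub nr_half; set d := x k.+1 - x k.
have := nrD (x k.+1 * d) (d * x k); have := nrM (x k.+1) d; have := nrM d (x k).
have := sqrt_iter_le k; have := sqrt_iter_le k.+1.
have := nr_ge0 (x k); have := nr_ge0 (x k.+1); have := nr_ge0 d; nra.
Qed.

Lemma sqrt_iter_step k : nr (x k.+1 - x k) <= 2^-1 ^+ k.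
Proof.
elim: k => [|k IH].
  by rewrite /= subr0 nr_half mul0r addr0; have := nr_ge0 h; have := h_small; lra.
apply: le_trans (sqrt_iter_contract k) _.
by rewrite exprS ler_wpM2l // invr_ge0 ler0n.
Qed.

Lemma sqrt_iter_dist k j :
  nr (x (k + j) - x k) <= 2 * 2^-1 ^+ k - 2 * 2^-1 ^+ (k + j).
Proof.
elim: j => [|j IH]; first by rewrite addn0 subrr nr0 subrr.
have := nr_dist_le (x (k + j).+1) (x (k + j)) (x k).
have := sqrt_iter_step (k + j); rewrite addnS exprS; lra.
Qed.

Lemma sqrt_iter_cauchy (e : R) : 0 < e ->
  exists N, forall m k, (N <= m)%N -> (N <= k)%N -> nr (x m - x k) < e.
Proof.
move=> e_gt0; have [|N ltN] := @exprVn2_lt R (e / 2); first by rewrite divr_gt0.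
exists N; suff dist_lt m k : (N <= k)%N -> (k <= m)%N -> nr (x m - x k) < e.
  move=> m k mN kN; case: (leqP k m) => km; first exact: dist_lt.
  by rewrite nr_distC dist_lt // ltnW.
move=> kN km; have := sqrt_iter_dist k (m - k); rewrite subnKC //.
have : 2^-1 ^+ k <= 2^-1 ^+ N :> R.
  by rewrite ler_wiXn2l // ?invr_ge0 ?ler0n // invf_le1 ?ltr0n // ler1n.
have : 0 <= 2^-1 ^+ m :> R by rewrite exprn_ge0 // invr_ge0 ler0n.
lra.
Qed.

Section Limit.
Variable l : A.
Hypothesis x_cvg : nr_cvg x l.

Lemma sqrt_limit_le : nr l <= 2^-1.
Proof.
apply/ler_addgt0Pr => d /x_cvg [N xN]; have := xN N (leqnn N).
have := nr_dist_le l (x N) 0; rewrite !subr0 nr_distC.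
have := sqrt_iter_le N; lra.
Qed.

Lemma sqrt_limit_herm : st l = l.
Proof.
apply/eqP; rewrite -subr_eq0; apply/eqP; apply: nr_lt_eq0 => e e_gt0.
have [N xN] := x_cvg (divr_gt0 e_gt0 (ltr0Sn _ 1)).
have -> : st l - l = st (l - x N) + (x N - l).
  by rewrite starB sqrt_iter_herm addrA subrK.
have := nrD (st (l - x N)) (x N - l); rewrite nr_star nr_distC.
have := xN N (leqnn N); lra.
Qed.

Lemma sqrt_limit_fix : l = half *: (h + l * l).
Proof.
apply/eqP; rewrite -subr_eq0; apply/eqP; apply: nr_lt_eq0 => e e_gt0.
have [N xN] := x_cvg (divr_gt0 e_gt0 (ltr0Sn _ 1)).
have -> : l - half *: (h + l * l) = (l - x N.+1) + (x N.+1 - half *: (h + l * l)).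
  by rewrite addrA subrK.
rewrite [x N.+1 in X in _ + X]/= sqrt_map_sub.
have := nrD (l - x N.+1) (half *: (x N * (x N - l) + (x N - l) * l)).
rewrite nr_half (nr_distC l).
have := nrD (x N * (x N - l)) ((x N - l) * l).
have := nrM (x N) (x N - l); have := nrM (x N - l) l.
have := xN N (leqnn N); have := xN N.+1 (leqnSn N).
have := sqrt_iter_le N; have := sqrt_limit_le.
have := nr_ge0 (x N); have := nr_ge0 (x N - l); have := nr_ge0 l.
nra.
Qed.

End Limit.

Lemma one_sub_herm_sqr : exists b, 1 - h = st b * b.
Proof.
have [l x_cvg] := nr_complete sqrt_iter_cauchy; exists (1 - l).
have l_fix : l + l = h + l * l.
  have half2 : 2^-1 + 2^-1 = 1 :> R by lra.
  by rewrite {1 2}(sqrt_limit_fix x_cvg) -scalerDl -rmorphD /= half2 scale1r.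
rewrite starB star1 (sqrt_limit_herm x_cvg) mulrBr mulr1 mulrBl mul1r.
by rewrite -addrA -opprD addrA l_fix addrK.
Qed.

End SquareRoot.

Section Monomials.
Variables (I : Type) (S : I -> A).

Inductive monomial : A -> Prop :=
| monomial1 : monomial 1
| monomialS i a : monomial a -> monomial (S i * a)
| monomialSt i a : monomial a -> monomial (st (S i) * a).

Lemma monomialM a b : monomial a -> monomial b -> monomial (a * b).
Proof.
move=> ma mb; elim: ma => {a} [|i a _ IH|i a _ IH]; first by rewrite mul1r.
- by rewrite -mulrA; apply: monomialS.
- by rewrite -mulrA; apply: monomialSt.
Qed.

Lemma monomial_star a : monomial a -> monomial (st a).
Proof.
have mS i : monomial (S i) by rewrite -[S i]mulr1; apply/monomialS/monomial1.
have mSt i : monomial (st (S i)) by rewrite -[st _]mulr1; apply/monomialSt/monomial1.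
elim=> {a} [|i a _ IH|i a _ IH]; first by rewrite star1; exact: monomial1.
- by rewrite starM; apply: monomialM.
- by rewrite starM starK; apply: monomialM.
Qed.

Local Notation mspan := (Defs.span monomial).

Lemma mspanD a b : mspan a -> mspan b -> mspan (a + b).
Proof.
by move=> ma mb; elim: ma => [|c w x mw _ IH]; rewrite ?add0r // -addrA; apply: spanS.
Qed.

Lemma mspanZ c a : mspan a -> mspan (c *: a).
Proof.
elim=> [|d w x mw _ IH]; first by rewrite scaler0; exact: span0.
by rewrite scalerDr scalerA; apply: spanS.
Qed.

Lemma mspanM a b : mspan a -> mspan b -> mspan (a * b).
Proof.
have mspan_mull w c : monomial w -> mspan c -> mspan (w * c).
  move=> mw; elim=> [|d w' x mw' _ IH]; first by rewrite mulr0; exact: span0.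
  by rewrite mulrDr -scalerAr; apply: spanS => //; apply: monomialM.
move=> ma mb; elim: ma => [|c w x mw _ IH]; first by rewrite mul0r; exact: span0.
by rewrite mulrDl -scalerAl; apply/mspanD/IH/mspanZ/mspan_mull.
Qed.

Lemma mspan_star a : mspan a -> mspan (st a).
Proof.
elim=> [|c w x mw _ IH]; first by rewrite star0; exact: span0.
by rewrite starD starZ; apply: spanS => //; apply: monomial_star.
Qed.

Lemma star_subalg_gen_mspan a : star_subalg_gen st S a -> mspan a.
Proof.
have mspan_mono w : monomial w -> mspan w.
  by move=> mw; rewrite -[w]scale1r -[_ *: w]addr0; apply: spanS mw (span0 _).
elim=> {a} [i||a b _ ma _ mb|c a _ ma|a b _ ma _ mb|a _ ma].
- by apply: mspan_mono; rewrite -[S i]mulr1; apply/monomialS/monomial1.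
- exact/mspan_mono/monomial1.
- exact: mspanD.
- exact: mspanZ.
- exact: mspanM.
- exact: mspan_star.
Qed.

End Monomials.

Section State.
Variable phi : A -> C.
Hypothesis Hphi : is_state st phi.

Lemma phiD a b : phi (a + b) = phi a + phi b. Proof. exact: state_add Hphi a b. Qed.
Lemma phiZ c a : phi (c *: a) = c * phi a. Proof. exact: state_scale Hphi c a. Qed.
Lemma phi_ge0 a : 0 <= phi (st a * a). Proof. exact: state_pos Hphi a. Qed.
Lemma phi1 : phi 1 = 1. Proof. exact: state_one Hphi. Qed.

Lemma phi0 : phi 0 = 0.
Proof. by apply: (addrI (phi 0)); rewrite -phiD !addr0. Qed.

Lemma phiN a : phi (- a) = - phi a.
Proof. by apply: (addrI (phi a)); rewrite -phiD !subrr phi0. Qed.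

Lemma phiB a b : phi (a - b) = phi a - phi b.
Proof. by rewrite phiD phiN. Qed.

Lemma phi_sum (J : Type) (r : seq J) (F : J -> A) :
  phi (\sum_(j <- r) F j) = \sum_(j <- r) phi (F j).
Proof. by elim: r => [|x r IH]; rewrite ?big_nil ?phi0 // !big_cons phiD IH. Qed.

Lemma phi_real a : phi (st a * a) \is Num.real.
Proof. exact: ger0_real (phi_ge0 a). Qed.

(* Positivity on [a + 1] and [a + 'i] makes [phi (st a) + phi a] and
   ['i * (phi (st a) - phi a)] real. *)
Lemma phi_star a : phi (st a) = (phi a)^*.
Proof.
set p := phi a; set q := phi (st a).
have sum_real : q + p \is Num.real.
  have := phi_real (a + 1).
  have -> : st (a + 1) * (a + 1) = st a * a + (st a + a) + 1.
    by rewrite starD star1 mulrDl !mulrDr !mulr1 !mul1r !addrA.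
  by rewrite !phiD phi1 rpredDr ?rpred1 // rpredDl ?phi_real.
have diff_real : 'i * q - 'i * p \is Num.real.
  have := phi_real (a + 'i *: 1).
  have -> : st (a + 'i *: 1) * (a + 'i *: 1) = st a * a + ('i *: st a - 'i *: a) + 1.
    rewrite starD starZ star1 conjCi mulrDl !mulrDr.
    rewrite -!scalerAl -!scalerAr !mul1r !mulr1 scalerA.
    by rewrite mulNr -expr2 sqrCi opprK scale1r scaleNr !addrA.
  by rewrite !phiD phiN !phiZ phi1 rpredDr ?rpred1 // rpredDl ?phi_real.
move/conj_Creal: sum_real; move/conj_Creal: diff_real.
rewrite rmorphB rmorphD !rmorphM /= conjCi => diff_conj sum_conj.
have i_neq0 : - 'i != 0 :> C by rewrite oppr_eq0 -normr_eq0 normCi oner_eq0.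
have diff_conj' : q^* - p^* = p - q.
  by apply: (mulfI i_neq0); rewrite mulrBr diff_conj; ring.
have : (q^* - p) * 2 = 0.
  have -> : (q^* - p) * 2 = (q^* + p^* - (q + p)) + (q^* - p^* - (p - q)) by ring.
  by rewrite sum_conj diff_conj' !subrr addr0.
by move/eqP; rewrite mulf_eq0 pnatr_eq0 orbF subr_eq0 => /eqP <-; rewrite conjCK.
Qed.

Lemma phi_quadratic_ge0 u v (s : C) : s \is Num.real ->
  0 <= phi (st v * v) - s * 2 * `|phi (st u * v)| ^+ 2
       + s ^+ 2 * phi (st u * u) * `|phi (st u * v)| ^+ 2.
Proof.
move=> s_real; set z := phi (st u * v); set t := - (s * z).
suff -> : phi (st v * v) - s * 2 * `|z| ^+ 2 + s ^+ 2 * phi (st u * u) * `|z| ^+ 2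
    = phi (st (v + t *: u) * (v + t *: u)) by exact: phi_ge0.
have -> : st (v + t *: u) * (v + t *: u) = st v * v + t *: (st v * u)
    + (t^* *: (st u * v) + (t^* * t) *: (st u * u)).
  by rewrite starD starZ mulrDl !mulrDr -!scalerAl -!scalerAr scalerA !addrA.
rewrite !phiD !phiZ -[st v * u]starK starM starK phi_star -/z normCK.
by rewrite /t rmorphN rmorphM /= (conj_Creal s_real); ring.
Qed.

Lemma phi_CS u v : 0 < phi (st u * u) ->
  `|phi (st u * v)| ^+ 2 <= phi (st u * u) * phi (st v * v).
Proof.
set U := phi (st u * u); set V := phi (st v * v); set N := `|_| ^+ 2 => U_gt0.
have Uinv_real : U^-1 \is Num.real by rewrite rpredV phi_real.
have := phi_quadratic_ge0 u v Uinv_real; rewrite -/U -/V -/N.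
have -> : V - U^-1 * 2 * N + U^-1 ^+ 2 * U * N = U^-1 * (U * V - N).
  by field; rewrite gt_eqF.
by rewrite pmulr_rge0 ?invr_gt0 // subr_ge0.
Qed.

Lemma phi_CS0 u v : phi (st v * v) = 0 -> phi (st u * v) = 0.
Proof.
move=> V0; set U := phi (st u * u); have U_ge0 : 0 <= U := phi_ge0 u.
set s := (U + 1)^-1.
have s_gt0 : 0 < s by rewrite invr_gt0 ltr_wpDl.
have sU_lt1 : s * U < 1 by rewrite mulrC ltr_pdivrMr ?ltr_wpDl // mul1r ltrDl.
have coef_lt0 : s * (s * U - 2) < 0.
  by rewrite pmulr_rlt0 // subr_lt0 (lt_trans sU_lt1) // ltr1n.
have := phi_quadratic_ge0 u v (gtr0_real s_gt0); rewrite V0 -/U.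
set N := `|_| ^+ 2; have -> : 0 - s * 2 * N + s ^+ 2 * U * N = N * (s * (s * U - 2)) by ring.
rewrite nmulr_lge0 // => N_le0.
have /eqP : N = 0 by apply: le_anti; rewrite N_le0 exprn_ge0.
by rewrite expf_eq0 /= normr_eq0 => /eqP.
Qed.

Lemma phi_herm_le b : st b = b -> phi b <= cr (2 * nr b).
Proof.
move=> b_herm; have [nrb0|nrb_neq0] := eqVneq (nr b) 0.
  by rewrite (nr_eq0 nrb0) phi0 nr0 mulr0 rmorph0.
have nrb_gt0 : 0 < nr b by rewrite lt_def nrb_neq0 nr_ge0.
set t := (2 * nr b)^-1; have t_gt0 : 0 < t by rewrite invr_gt0 mulr_gt0.
have [c sqrt_c] : exists c, 1 - cr t *: b = st c * c.
  apply: one_sub_herm_sqr; first by rewrite starZ conj_cr b_herm.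
  have -> : nr (cr t *: b) = 2^-1 by rewrite nrZ gtr0_norm // /t; field.
  lra.
have := phi_ge0 c; rewrite -sqrt_c phiB phi1 phiZ subr_ge0 => t_phib_le1.
have crt_gt0 : 0 < cr t by rewrite ltr0c.
rewrite -[phi b]mul1r -(mulVf (lt0r_neq0 crt_gt0)) -mulrA.
apply: le_trans (ler_wpM2l _ t_phib_le1) _; first by rewrite invr_ge0 ltW.
by rewrite mulr1 -fmorphV /= /t invrK.
Qed.

Lemma phi_norm_le a : `|phi a| <= cr (2 * nr a).
Proof.
have := @phi_CS 1 a; rewrite star1 !mul1r phi1 => /(_ ltr01) CS.
have herm : st (st a * a) = st a * a by rewrite starM starK.
have := phi_herm_le herm; rewrite nr_cstar => bound.
rewrite -(@ler_pXn2r _ 2) ?nnegrE ?normr_ge0 ?ler0c ?mulr_ge0 ?nr_ge0 //.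
rewrite mul1r in CS; apply: le_trans CS (le_trans bound _).
by rewrite -rmorphXn /= lecR; have := nr_ge0 a; nra.
Qed.

Section Cuntz.
Variable n : nat.
Hypothesis n_ge2 : (2 <= n)%N.
Variable S : 'I_n -> A.
Hypothesis S_iso : forall i, st (S i) * S i = 1.
Hypothesis S_sum : \sum_(i < n) S i * st (S i) = 1.
Hypothesis phi_tr : forall a b, in_Fn st nrm S b -> phi (a * b) = phi (b * a).

Local Notation Sw := (Sword S).

Lemma Sword_nil : Sw [::] = 1. Proof. by rewrite /Sword big_nil. Qed.
Lemma Sword_cons i mu : Sw (i :: mu) = S i * Sw mu. Proof. by rewrite /Sword big_cons. Qed.
Lemma Sword_cat mu nu : Sw (mu ++ nu) = Sw mu * Sw nu. Proof. by rewrite /Sword big_cat. Qed.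
Lemma Sword1 i : Sw [:: i] = S i. Proof. by rewrite Sword_cons Sword_nil mulr1. Qed.

Lemma SwordK mu : st (Sw mu) * Sw mu = 1.
Proof.
elim: mu => [|i mu IH]; first by rewrite Sword_nil star1 mulr1.
by rewrite Sword_cons starM -mulrA (mulrA (st (S i))) S_iso mul1r IH.
Qed.

Lemma Sword_in_Fn mu nu : size mu = size nu -> in_Fn st nrm S (Sw mu * st (Sw nu)).
Proof.
move=> eq_size e e_gt0; exists (Sw mu * st (Sw nu)); split.
  rewrite -[X in Defs.span _ X]addr0 -[X in X + 0]scale1r.
  by apply: spanS; [exists mu, nu | exact: span0].
by rewrite subrr nrmE nr0 rmorph0.
Qed.

Lemma phi_Sword_tr mu nu a : size mu = size nu ->
  phi (a * (Sw mu * st (Sw nu))) = phi (Sw mu * st (Sw nu) * a).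
Proof. by move=> eq_size; apply/phi_tr/Sword_in_Fn. Qed.

(* With [w = S j * v], the [k = j] term of
   [phi (st v * v) = \sum_k phi (st w * S k * st (S k) * w)] is already
   [phi (st v * v)], so the other (nonnegative) terms vanish; Cauchy-Schwarz
   then kills [phi (u * st (S i) * S j * v)]. *)
Lemma phi_orthoS i j u v : i != j -> phi (u * (st (S i) * S j) * v) = 0.
Proof.
move=> neq_ij.
pose F k := phi (st (st (S k) * S j * v) * (st (S k) * S j * v)).
have F_ge0 k : 0 <= F k by exact: phi_ge0.
have F_expand k : F k = phi (st v * st (S j) * (S k * st (S k)) * (S j * v)).
  by rewrite /F !starM starK !mulrA.
have F_sum : \sum_k F k = phi (st v * v).
  under eq_bigr do rewrite F_expand.
  by rewrite -phi_sum -mulr_suml -mulr_sumr S_sum mulr1 -mulrA (mulrA (st (S j))) S_iso mul1r.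
have Fj : F j = phi (st v * v) by rewrite /F S_iso mul1r.
have F_others : \sum_(k | k != j) F k = 0.
  by move: F_sum; rewrite (bigD1 j) //= Fj -[RHS]addr0 => /addrI.
have := phi_CS0 (st u) (psumr_eq0P (fun k _ => F_ge0 k) F_others neq_ij).
by rewrite starK !mulrA.
Qed.

Definition conjw (al : seq 'I_n) (y : A) := Sw al * y * st (Sw al).

Lemma conjw_nil y : conjw [::] y = y.
Proof. by rewrite /conjw Sword_nil star1 mul1r mulr1. Qed.

Lemma conjw1 i y : conjw [:: i] y = S i * y * st (S i).
Proof. by rewrite /conjw Sword1. Qed.

Lemma conjw_cat al be y : conjw (al ++ be) y = conjw al (conjw be y).
Proof. by rewrite /conjw Sword_cat starM !mulrA. Qed.

Lemma conjw_sum al (J : Type) (r : seq J) (F : J -> A) :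
  conjw al (\sum_(j <- r) F j) = \sum_(j <- r) conjw al (F j).
Proof. by rewrite /conjw mulr_sumr mulr_suml. Qed.

Lemma phi_conjw_size al be y : size al = size be -> phi (conjw al y) = phi (conjw be y).
Proof.
move=> eq_size; have := phi_Sword_tr (Sw be * y * st (Sw al)) eq_size.
rewrite -mulrA (mulrA (st (Sw al))) SwordK mul1r => ->.
by rewrite !mulrA -(mulrA _ (st (Sw be))) SwordK mulr1.
Qed.

Lemma phi_conjw_offdiag al a b y : a != b -> phi (conjw al (S a * y * st (S b))) = 0.
Proof.
move=> neq_ab; set Sab := Sw (rcons al a) * st (Sw (rcons al b)).
have -> : conjw al (S a * y * st (S b)) = Sab * conjw (rcons al b) y.
  rewrite /Sab /conjw !mulrA -(mulrA _ _ (Sw (rcons al b))) SwordK mulr1.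
  by rewrite -!cats1 !Sword_cat !starM !Sword1 !mulrA.
rewrite -phi_Sword_tr ?size_rcons // /conjw /Sab -!cats1 !Sword_cat !starM !Sword1.
have -> : Sw al * S b * y * (st (S b) * st (Sw al)) * (Sw al * S a * (st (S b) * st (Sw al)))
    = Sw al * S b * y * (st (S b) * (st (Sw al) * Sw al) * S a) * (st (S b) * st (Sw al)).
  by rewrite !mulrA.
by rewrite SwordK mulr1 phi_orthoS // eq_sym.
Qed.

Lemma phi_conjw_rot al a w : phi (conjw al (S a * w)) = phi (conjw (rcons al a) (w * S a)).
Proof.
have -> : S a * w = \sum_j S a * (w * S j) * st (S j).
  by rewrite -[LHS]mulr1 -S_sum mulr_sumr; apply: eq_bigr => j _; rewrite !mulrA.
rewrite conjw_sum phi_sum (bigD1 a) //= big1 ?addr0.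
  by rewrite -cats1 conjw_cat conjw1 !mulrA.
by move=> j neq_ja; rewrite phi_conjw_offdiag // eq_sym.
Qed.

Lemma phi_conjw_rotw p al q :
  phi (conjw al (Sw (p ++ q))) = phi (conjw (al ++ p) (Sw (q ++ p))).
Proof.
elim: p al q => [|a p IH] al q; first by rewrite /= !cats0.
rewrite cat_cons Sword_cons phi_conjw_rot.
have -> : Sw (p ++ q) * S a = Sw (p ++ (q ++ [:: a])) by rewrite catA [in RHS]Sword_cat Sword1.
by rewrite IH -cats1 -!catA.
Qed.

Lemma n_neq0 : n%:R != 0 :> C.
Proof. by rewrite pnatr_eq0 -lt0n (leq_trans _ n_ge2). Qed.

Lemma phi_conjw1 al : phi (conjw al 1) = n%:R^-1 ^+ size al.
Proof.
elim/last_ind: al => [|al j IH]; first by rewrite conjw_nil phi1 expr0.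
have phi_last k : phi (conjw (rcons al j) 1) = phi (conjw al (S k * st (S k))).
  rewrite (@phi_conjw_size _ (rcons al k)) ?size_rcons //.
  by rewrite -cats1 conjw_cat conjw1 mulr1.
have : phi (conjw al 1) = n%:R * phi (conjw (rcons al j) 1).
  rewrite -{1}S_sum conjw_sum phi_sum.
  under eq_bigr do rewrite -phi_last.
  by rewrite sumr_const card_ord mulr_natl.
rewrite IH size_rcons exprSr => ->.
by rewrite mulrAC mulfV ?n_neq0 // mul1r.
Qed.

Lemma phi_conjw_Sword_long p al m : p != [::] ->
  exists2 be, (m <= size be)%N & phi (conjw al (Sw p)) = phi (conjw be (Sw p)).
Proof.
move=> p_neq0; elim: m => [|m [be le_m ->]]; first by exists al.
exists (be ++ p); first by rewrite size_cat -addn1 leq_add // lt0n size_eq0.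
by rewrite -{1}[p]cats0 phi_conjw_rotw.
Qed.

Lemma invn_exprM_le k m : (m <= k)%N -> n%:R^-1 ^+ k * n%:R^-1 ^+ k <= 2^-1 ^+ m :> C.
Proof.
move=> le_mk; have n_inv_ge0 : 0 <= n%:R^-1 :> C by rewrite invr_ge0 ler0n.
have n_inv_le : n%:R^-1 <= 2^-1 :> C.
  by rewrite lef_pV2 ?posrE ?ltr0n ?(leq_trans _ n_ge2) // ler_nat.
have half_le1 : 2^-1 <= 1 :> C by rewrite invf_le1 ?ltr0n // ler1n.
apply: le_trans (ler_piMr _ _) _; rewrite ?exprn_ge0 ?exprn_ile1 ?(le_trans n_inv_le) //.
apply: le_trans (lerXn2r _ _ _ n_inv_le) _; rewrite ?nnegrE ?invr_ge0 ?ler0n //.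
by apply: ler_wiXn2l; rewrite ?invr_ge0 ?ler0n.
Qed.

(* Rotating [p] into the conjugating word makes it arbitrarily long, and
   Cauchy-Schwarz bounds [|phi (conjw be (Sw p))|^2] by [n^-(2 |be|)]. *)
Lemma phi_conjw_Sword al p : p != [::] -> phi (conjw al (Sw p)) = 0.
Proof.
move=> p_neq0.
suff : `|phi (conjw al (Sw p))| ^+ 2 = 0 by move/eqP; rewrite expf_eq0 /= normr_eq0 => /eqP.
apply: le_halfX_eq0 => [|m]; first exact: exprn_ge0.
have [be le_m ->] := phi_conjw_Sword_long al m p_neq0.
have uu : Sw be * st (Sw be) = conjw be 1 by rewrite /conjw mulr1.
have vv : st (Sw p * st (Sw be)) * (Sw p * st (Sw be)) = conjw be 1.
  by rewrite starM starK /conjw mulr1 -!mulrA (mulrA (st (Sw p))) SwordK mul1r.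
have := @phi_CS (st (Sw be)) (Sw p * st (Sw be)).
rewrite starK vv uu !phi_conjw1 mulrA => /(_ (exprn_gt0 _ _)) CS.
apply: le_trans (CS _) (invn_exprM_le le_m).
by rewrite invr_gt0 ltr0n (leq_trans _ n_ge2).
Qed.

Lemma phi_conjw_starSword al p : p != [::] -> phi (conjw al (st (Sw p))) = 0.
Proof.
move=> p_neq0; have -> : conjw al (st (Sw p)) = st (conjw al (Sw p)).
  by rewrite /conjw !starM starK mulrA.
by rewrite phi_star phi_conjw_Sword // conjC0.
Qed.

Lemma phi_conjw_word al mu nu : phi (conjw al (Sw mu * st (Sw nu))) =
  if mu == nu then n%:R^-1 ^+ (size al + size mu) else 0.
Proof.
elim: mu al nu => [|a mu IH] al [|b nu].
- by rewrite Sword_nil star1 mulr1 phi_conjw1 addn0.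
- by rewrite Sword_nil mul1r phi_conjw_starSword.
- by rewrite Sword_nil star1 mulr1 phi_conjw_Sword.
have -> : Sw (a :: mu) * st (Sw (b :: nu)) = S a * (Sw mu * st (Sw nu)) * st (S b).
  by rewrite !Sword_cons starM !mulrA.
rewrite eqseq_cons; have [<-|neq_ab] := eqVneq a b; last exact: phi_conjw_offdiag.
by rewrite -conjw1 -conjw_cat IH size_cat /= addn1 addSnnS.
Qed.

Definition phi_equiv a b := forall u v, phi (u * a * v) = phi (u * b * v).

(* [st (S i) * S j = 0] for [i != j] is only needed, and only proved, inside
   [phi]; modulo [phi_equiv] every monomial is [0] or a word [Sw mu * st (Sw nu)]. *)
Lemma monomial_phi_equiv a : monomial S a ->
  phi_equiv a 0 \/ exists mu nu, phi_equiv a (Sw mu * st (Sw nu)).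
Proof.
elim=> {a} [|i a _ [eqv|[mu [nu eqv]]]|i a _ [eqv|[mu [nu eqv]]]].
- by right; exists [::], [::]; rewrite Sword_nil star1 mulr1 => u v.
- by left=> u v; rewrite mulrA (eqv (u * S i) v) !mulr0 !mul0r.
- right; exists (i :: mu), nu => u v.
  by rewrite mulrA (eqv (u * S i) v) Sword_cons !mulrA.
- by left=> u v; rewrite mulrA (eqv (u * st (S i)) v) !mulr0 !mul0r.
case: mu eqv => [|j mu] eqv.
  right; exists [::], (rcons nu i) => u v.
  rewrite mulrA (eqv (u * st (S i)) v) Sword_nil !mul1r -cats1 Sword_cat Sword1.
  by rewrite starM !mulrA.
have [->|neq_ij] := eqVneq i j.
  right; exists mu, nu => u v.
  by rewrite mulrA (eqv (u * st (S j)) v) Sword_cons !mulrA -(mulrA u) S_iso mulr1.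
left=> u v; rewrite mulrA (eqv (u * st (S i)) v) Sword_cons !mulr0 !mul0r phi0.
have -> : u * st (S i) * (S j * Sw mu * st (Sw nu)) * v =
    u * (st (S i) * S j) * (Sw mu * st (Sw nu) * v) by rewrite !mulrA.
exact: phi_orthoS.
Qed.

Lemma phi_conjS_word i mu nu :
  phi (S i * (Sw mu * st (Sw nu)) * st (S i)) = n%:R^-1 * phi (Sw mu * st (Sw nu)).
Proof.
rewrite -conjw1 phi_conjw_word -[Sw mu * _]conjw_nil phi_conjw_word.
by case: eqP => _; rewrite ?mulr0 //= add0n add1n exprS.
Qed.

Lemma phi_conjS_mspan i a : Defs.span (monomial S) a ->
  phi (S i * a * st (S i)) = n%:R^-1 * phi a.
Proof.
elim=> [|c w x mw _ IH]; first by rewrite mulr0 mul0r !phi0 mulr0.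
rewrite mulrDr mulrDl -scalerAr -scalerAl !phiD !phiZ IH mulrDr mulrCA; congr (_ * _ + _).
case: (monomial_phi_equiv mw) => [eqv|[mu [nu eqv]]].
  rewrite eqv mulr0 mul0r phi0; have := eqv 1 1.
  by rewrite !mul1r !mulr1 phi0 => ->; rewrite mulr0.
rewrite eqv; have := eqv 1 1; rewrite !mul1r !mulr1 => ->.
exact: phi_conjS_word.
Qed.

Hypothesis S_gen : cstar_generated_by st nrm S.

Lemma phi_conjS i x : phi (S i * x * st (S i)) = n%:R^-1 * phi x.
Proof.
pose f x := phi (S i * x * st (S i)) - n%:R^-1 * phi x.
suff : f x = 0 by move/eqP; rewrite subr_eq0 => /eqP.
have fD a b : f (a + b) = f a + f b.
  by rewrite /f mulrDr mulrDl !phiD mulrDr; ring.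
have n_inv_le1 : `|n%:R^-1 : C| <= 1.
  by rewrite normfV normr_nat invf_le1 ?ltr0n ?ler1n // (leq_trans _ n_ge2).
have f_bounded a : `|f a| <= cr (4 * nr a).
  apply: le_trans (ler_normB _ _) _; rewrite normrM.
  apply: le_trans (lerD (phi_norm_le _) (ler_pM _ _ n_inv_le1 (phi_norm_le a))) _;
    rewrite ?normr_ge0 // mul1r -rmorphD /= lecR.
  by have := nr_conj_isometry a (S_iso i); lra.
apply: (nclosure_additive_eq0 fD f_bounded) (S_gen x) => a /star_subalg_gen_mspan.
by move/(phi_conjS_mspan i); rewrite /f => ->; rewrite subrr.
Qed.

Lemma phi_PhiN x : phi (PhiN st S x) = phi x.
Proof.
rewrite /PhiN phi_sum; under eq_bigr do rewrite phi_conjS.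
by rewrite sumr_const card_ord -mulrnAl -[_ *+ n]mulr_natr mulVf ?n_neq0 ?mul1r.
Qed.

Lemma phi_PhiN_adjoint x y : phi (st y * PhiN st S x) = phi (st (PsiN st S y) * x).
Proof.
have term i : phi (st y * (S i * x * st (S i))) = n%:R^-1 * phi (st (S i) * st y * S i * x).
  have S_proj_Fn : in_Fn st nrm S (S i * st (S i)) by rewrite -Sword1; exact: Sword_in_Fn.
  have -> : st y * (S i * x * st (S i)) = st y * S i * x * st (S i) * (S i * st (S i)).
    by rewrite !mulrA -(mulrA _ (st (S i))) S_iso mulr1.
  by rewrite phi_tr // -(phi_conjS i) !mulrA.
rewrite /PhiN /PsiN mulr_sumr phi_sum; under eq_bigr do rewrite term.
rewrite -mulr_sumr starZ star_sum -scalerAl phiZ mulr_suml phi_sum.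
rewrite fmorphV /= conjC_nat; congr (_ * _); apply: eq_bigr => i _.
by rewrite !starM starK !mulrA.
Qed.

End Cuntz.

End State.

End StarAlgebra.

Theorem mainTheorem5 (R : realType) (A : algType (complex R))
  (star : A -> A) (nrm : A -> complex R) (HA : is_cstar_algebra star nrm)
  (n : nat) (hn : (2 <= n)%N) (S : 'I_n -> A)
  (Hiso : forall i, star (S i) * S i = 1)
  (Hsum : \sum_(i < n) S i * star (S i) = 1)
  (Hgen : cstar_generated_by star nrm S)
  (phi : A -> complex R) (Hphi : is_state star phi)
  (Htr : forall a b, in_Fn star nrm S b -> phi (a * b) = phi (b * a)) :
  (forall x, phi (PhiN star S x) = phi x) /\
  (forall x y, phi (star y * PhiN star S x) = phi (star (PsiN star S y) * x)).
Proof.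
split; [exact: (phi_PhiN HA Hphi hn Hiso Hsum Htr Hgen) |
        exact: (phi_PhiN_adjoint HA Hphi hn Hiso Hsum Htr Hgen)].
Qed.
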